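(* Let $d\in\ell^\infty(\mathbb{Z})$ be a limit-periodic potential that has an infinite frequency integer set $S_d$. Let $\tilde d\in\ell^\infty(\mathbb{Z})$ be a limit-periodic potential with a frequency integer set $S_{\tilde d}$. If $S_{\tilde d}$ is an infinite subset of $S_d$, then $\Omega_d\cong\Omega_{\tilde d}$ as topological groups.
   Context: $\ell^\infty(\mathbb{Z})$ carries the sup norm; $\sigma$ is the left shift, $(\sigma d)_n=d_{n+1}$. For $d\in\ell^\infty(\mathbb{Z})$, $\mathrm{orb}(d)=\{\sigma^k d: k\in\mathbb{Z}\}$ and $\Omega_d=\mathrm{hull}(d)$ is the closure of $\mathrm{orb}(d)$ in $\ell^\infty(\mathbb{Z})$. A potential $p$ is periodic if $\mathrm{orb}(p)$ is finite; $d$ is limit-periodic if it lies in the $\ell^\infty$-closure of the set of periodic potentials. For limit-periodic $d$, $\Omega_d$ is compact and carries a unique topological group structure (which is abelian) with identity $d$ such that $k\mapsto\sigma^k(d)$ is a group homomorphism $\mathbb{Z}\to\Omega_d$; isomorphisms of hulls refer to this structure. The frequency module $F_d\subset\mathbb{R}$ is the set of $\alpha\in\mathbb{R}$ such that $\sigma^k(d)\mapsto e^{ik\alpha}$ extends to a continuous character of $\Omega_d$ (equivalently, the $\mathbb{Z}$-module generated by those $\alpha$ with $\lim_{n\to\infty}\frac1{2n}\sum_{k=-n}^n d(k)e^{-ik\alpha}\neq0$). A frequency integer set of $d$ is a set $S=\{n_j\}$ of positive integers with $n_j\mid n_{j+1}$ for all $j$ such that $F_d$ is the $\mathbb{Z}$-module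 generated by $\{2\pi/n_j: n_j\in S\}$. *)

From Stdlib Require Import Reals ZArith List.
From Coquelicot Require Import Coquelicot.
Open Scope R_scope.

Definition pot := Z -> R.
Definition bounded (d : pot) : Prop := exists M, forall n, Rabs (d n) <= M.

Definition supclose (e : R) (x y : pot) : Prop := forall n, Rabs (x n - y n) <= e.

Definition shift (k : Z) (d : pot) : pot := fun n => d (n + k)%Z.

Definition periodic (p : pot) : Prop :=
  bounded p /\ exists l : list pot, forall k : Z, In (shift k p) l.

Definition limit_periodic (d : pot) : Prop :=
  bounded d /\
  forall eps, 0 < eps -> exists p, periodic p /\ supclose eps d p.

Definition hull (d : pot) (x : pot) : Prop :=
  bounded x /\ forall eps, 0 < eps -> exists k : Z, supclose eps x (shift k d).

Definition cont_on (A : pot -> Prop) (f : pot -> pot) : Prop :=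
  forall x, A x -> forall eps, 0 < eps -> exists delta, 0 < delta /\
    forall y, A y -> supclose delta x y -> supclose eps (f x) (f y).

Definition cont2_on (A : pot -> Prop) (f : pot -> pot -> pot) : Prop :=
  forall x y, A x -> A y -> forall eps, 0 < eps -> exists delta, 0 < delta /\
    forall x' y', A x' -> A y' -> supclose delta x x' -> supclose delta y y' ->
      supclose eps (f x y) (f x' y').

Definition contC_on (A : pot -> Prop) (f : pot -> C) : Prop :=
  forall x, A x -> forall eps, 0 < eps -> exists delta, 0 < delta /\
    forall y, A y -> supclose delta x y -> Cmod (Cminus (f x) (f y)) <= eps.

(* (mul, inv) is a topological group structure on hull d with identity d such that
   k |-> sigma^k d is a group homomorphism Z -> hull d. (The context asserts that
   such a structure exists and is unique for limit-periodic d.) *)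
Definition hull_group (d : pot) (mul : pot -> pot -> pot) (inv : pot -> pot) : Prop :=
  (forall x y, hull d x -> hull d y -> hull d (mul x y)) /\
  (forall x, hull d x -> hull d (inv x)) /\
  (forall x y z, hull d x -> hull d y -> hull d z ->
     mul x (mul y z) = mul (mul x y) z) /\
  (forall x, hull d x -> mul d x = x /\ mul x d = x) /\
  (forall x, hull d x -> mul (inv x) x = d /\ mul x (inv x) = d) /\
  cont2_on (hull d) mul /\
  cont_on (hull d) inv /\
  (forall j k : Z, mul (shift j d) (shift k d) = shift (j + k)%Z d).

Definition expi (t : R) : C := (cos t, sin t).

(* alpha is in the frequency module F_d: sigma^k d |-> e^{i k alpha} extends to a
   continuous character of the hull (w.r.t. the hull group law mul). *)
Definition freq_module (d : pot) (mul : pot -> pot -> pot) (alpha : R) : Prop :=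
  exists chi : pot -> C,
    (forall x, hull d x -> Cmod (chi x) = 1) /\
    (forall x y, hull d x -> hull d y -> chi (mul x y) = Cmult (chi x) (chi y)) /\
    contC_on (hull d) chi /\
    (forall k : Z, chi (shift k d) = expi (IZR k * alpha)).

Definition zspan (G : R -> Prop) (alpha : R) : Prop :=
  exists l : list (Z * R)%type, List.Forall (fun p => G (snd p)) l /\
    alpha = fold_right (fun p acc => IZR (fst p) * snd p + acc) 0 l.

Definition freq_int_set (d : pot) (mul : pot -> pot -> pot) (S : nat -> Prop) : Prop :=
  exists n : nat -> nat,
    (forall j, (0 < n j)%nat) /\
    (forall j, Nat.divide (n j) (n (j + 1)%nat)) /\
    (forall m, S m <-> exists j, n j = m) /\
    (forall alpha, freq_module d mul alpha <->
       zspan (fun a => exists m, S m /\ a = 2 * PI / INR m) alpha).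

Definition infinite_nat_set (S : nat -> Prop) : Prop :=
  ~ exists l : list nat, forall m, S m -> In m l.

Definition hull_iso (d : pot) (mul : pot -> pot -> pot)
    (d' : pot) (mul' : pot -> pot -> pot) (Phi Psi : pot -> pot) : Prop :=
  (forall x, hull d x -> hull d' (Phi x)) /\
  (forall y, hull d' y -> hull d (Psi y)) /\
  (forall x, hull d x -> Psi (Phi x) = x) /\
  (forall y, hull d' y -> Phi (Psi y) = y) /\
  cont_on (hull d) Phi /\ cont_on (hull d') Psi /\
  (forall x y, hull d x -> hull d y -> Phi (mul x y) = mul' (Phi x) (Phi y)).

(* The hull of a limit-periodic [d] is governed by its open moduli: the [r > 0] for which
   [rZ] is open in the topology that [k |-> shift k d] pulls back to [Z]. A continuous
   character of the hull of order [r] is the same thing as an open subgroup of index [r], so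
   these are exactly the [r] with [2 PI / r] in the frequency module. Since [S_dt] is cofinal
   in the divisibility chain [S_d], both frequency modules coincide and [d], [dt] have the same
   open moduli. Limit-periodicity makes the open moduli a neighbourhood basis of the orbit
   topology, so [shift k d |-> shift k dt] and its inverse are uniformly continuous on the
   orbits; their extensions by continuity are mutually inverse continuous homomorphisms. *)

From Pilot Require Import Defs.
From Stdlib Require Import Reals ZArith List Lra Lia.
From Stdlib Require Import Classical ClassicalEpsilon FunctionalExtensionality.
From Coquelicot Require Import Coquelicot.
Open Scope R_scope.

(* The Stdlib also exports constants named [shift] (Zpower) and [bounded] (Rtopology). *)
Local Notation shift := Defs.shift.
Local Notation bounded := Defs.bounded.

Lemma supclose_sym e x y : supclose e x y -> supclose e y x.
Proof. intros H n. rewrite Rabs_minus_sym. apply H. Qed.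

Lemma supclose_trans a b x y z : supclose a x y -> supclose b y z -> supclose (a + b) x z.
Proof.
  intros Hxy Hyz n. replace (x n - z n) with ((x n - y n) + (y n - z n)) by ring.
  eapply Rle_trans; [apply Rabs_triang|]. specialize (Hxy n); specialize (Hyz n). lra.
Qed.

Lemma supclose_trans_half e x y z :
  supclose (e / 2) x y -> supclose (e / 2) y z -> supclose e x z.
Proof. intros Hxy Hyz. replace e with (e / 2 + e / 2) by field. eapply supclose_trans; eauto. Qed.

Lemma supclose_weaken a b x y : a <= b -> supclose a x y -> supclose b x y.
Proof. intros Hab H n. specialize (H n). lra. Qed.

Lemma supclose_refl e x : 0 <= e -> supclose e x x.
Proof. intros He n. unfold Rminus. rewrite Rplus_opp_r, Rabs_R0. exact He. Qed.

Lemma supclose_all_eq x y : (forall eps, 0 < eps -> supclose eps x y) -> x = y.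
Proof.
  intros H. apply functional_extensionality. intros n.
  destruct (Req_dec (x n) (y n)) as [E|E]; auto. exfalso.
  assert (P : 0 < Rabs (x n - y n)) by (apply Rabs_pos_lt; lra).
  specialize (H (Rabs (x n - y n) / 2) ltac:(lra) n). lra.
Qed.

Lemma supclose_shift e k x y : supclose e x y -> supclose e (shift k x) (shift k y).
Proof. intros H n. apply H. Qed.

Lemma shift_shift j k x : shift j (shift k x) = shift (k + j) x.
Proof. apply functional_extensionality; intro n; unfold shift. f_equal. lia. Qed.

Lemma shift_0 x : shift 0 x = x.
Proof. apply functional_extensionality; intro n; unfold shift. f_equal. lia. Qed.

Lemma supclose_shift_shift e j k l x :
  supclose e (shift k x) (shift l x) -> supclose e (shift (k + j) x) (shift (l + j) x).
Proof. intros H. rewrite <- !shift_shift. now apply supclose_shift. Qed.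

Lemma supclose_shift_sub e k l x :
  supclose e (shift k x) (shift l x) <-> supclose e (shift (k - l) x) x.
Proof.
  split; intro H.
  - apply (supclose_shift_shift _ (- l)) in H.
    replace (l + - l)%Z with 0%Z in H by lia. rewrite shift_0 in H.
    now replace (k - l)%Z with (k + - l)%Z by lia.
  - rewrite <- (shift_0 x) in H at 2. apply (supclose_shift_shift _ l) in H.
    now replace (k - l + l)%Z with k in H by lia.
Qed.

Lemma hull_shift x k : bounded x -> hull x (shift k x).
Proof.
  intros [M HM]. split.
  - exists M. intro n. apply HM.
  - intros eps He. exists k. apply supclose_refl. lra.
Qed.

Lemma hull_self x : bounded x -> hull x x.
Proof. intros Hx. rewrite <- (shift_0 x) at 2. now apply hull_shift. Qed.

Lemma hull_mul_approx e mul inv x y eps : bounded e -> hull_group e mul inv ->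
  hull e x -> hull e y -> 0 < eps -> exists j k,
    supclose eps x (shift j e) /\ supclose eps y (shift k e) /\
    supclose eps (mul x y) (shift (j + k) e).
Proof.
  intros Be (_ & _ & _ & _ & _ & Hcont & _ & Hshift) Hx Hy He.
  destruct (Hcont x y Hx Hy eps He) as [dl [Hdl Hc]].
  destruct (proj2 Hx (Rmin dl eps)) as [j Hj]; [now apply Rmin_pos|].
  destruct (proj2 Hy (Rmin dl eps)) as [k Hk]; [now apply Rmin_pos|].
  exists j, k. split; [|split].
  - eapply supclose_weaken; [apply Rmin_r|exact Hj].
  - eapply supclose_weaken; [apply Rmin_r|exact Hk].
  - rewrite <- Hshift. apply Hc; try apply hull_shift; auto.
    + eapply supclose_weaken; [apply Rmin_l|exact Hj].
    + eapply supclose_weaken; [apply Rmin_l|exact Hk].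
Qed.

Definition Z_subgroup (P : Z -> Prop) : Prop :=
  P 0%Z /\ (forall x y, P x -> P y -> P (x + y)%Z) /\ (forall x, P x -> P (- x)%Z).

Lemma Z_subgroup_mul P m t : Z_subgroup P -> P m -> P (m * t)%Z.
Proof.
  intros (P0 & Padd & Popp) Pm. induction t using Z.peano_ind.
  - now rewrite Z.mul_0_r.
  - replace (m * Z.succ t)%Z with (m * t + m)%Z by lia. auto.
  - replace (m * Z.pred t)%Z with (m * t + - m)%Z by lia. auto.
Qed.

Lemma Z_least_positive (P : Z -> Prop) : (exists z, (0 < z)%Z /\ P z) ->
  exists r, (0 < r)%Z /\ P r /\ forall a, (0 < a < r)%Z -> ~ P a.
Proof.
  intros [z [Hz Pz]]. apply NNPP; intro Hn.
  assert (K : forall n : nat, forall w, (0 < w <= Z.of_nat n)%Z -> ~ P w).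
  { induction n as [|n IH]; intros w Hw Pw; [lia|].
    apply Hn. exists w. split; [lia|split; auto]. intros a Ha Pa.
    apply (IH a); auto. lia. }
  apply (K (Z.to_nat z) z); auto. lia.
Qed.

Lemma Z_subgroup_least_divides P r m : Z_subgroup P -> (0 < r)%Z -> P r ->
  (forall a, (0 < a < r)%Z -> ~ P a) -> P m -> (r | m)%Z.
Proof.
  intros HP Hr Pr Hmin Pm. apply Z.mod_divide; [lia|].
  pose proof (Z.mod_pos_bound m r Hr).
  destruct (Z.eq_dec (m mod r) 0) as [E|E]; auto. exfalso.
  apply (Hmin (m mod r)%Z); [lia|].
  pose proof (Z_subgroup_mul P r (m / r) HP Pr) as Pq.
  destruct HP as (_ & Padd & Popp).
  rewrite Z.mod_eq by lia. unfold Z.sub. auto.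
Qed.

Lemma finite_uniform_radius (Q : nat -> R -> Prop) N :
  (forall a d1 d2, 0 < d1 <= d2 -> Q a d2 -> Q a d1) ->
  (forall a, (a < N)%nat -> exists dl, 0 < dl /\ Q a dl) ->
  exists dl, 0 < dl /\ forall a, (a < N)%nat -> Q a dl.
Proof.
  intros Hmono. induction N as [|N IH]; intros H.
  - exists 1. split; [lra|]. intros; lia.
  - destruct IH as [d1 [Hd1 Q1]]. { intros a Ha; apply H; lia. }
    destruct (H N) as [d2 [Hd2 Q2]]; [lia|].
    exists (Rmin d1 d2). split; [now apply Rmin_pos|].
    intros a Ha. destruct (Nat.eq_dec a N) as [->|Hne].
    + apply (Hmono _ _ d2); [split; [now apply Rmin_pos|apply Rmin_r]|exact Q2].
    + apply (Hmono _ _ d1); [split; [now apply Rmin_pos|apply Rmin_l]|]. apply Q1. lia.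
Qed.

Lemma period_subgroup p : Z_subgroup (fun k => shift k p = p).
Proof.
  split; [|split].
  - apply shift_0.
  - intros x y Hx Hy. now rewrite <- shift_shift, Hx.
  - intros x Hx. rewrite <- Hx at 1. rewrite shift_shift.
    replace (x + - x)%Z with 0%Z by lia. apply shift_0.
Qed.

Lemma shift_eq_period p i j : shift i p = shift j p -> shift (j - i) p = p.
Proof.
  intros E. apply (f_equal (shift (- i))) in E. rewrite !shift_shift in E.
  replace (i + - i)%Z with 0%Z in E by lia. rewrite shift_0 in E.
  replace (j - i)%Z with (j + - i)%Z by lia. now symmetry.
Qed.

Lemma periodic_has_period p : periodic p -> exists q, (0 < q)%Z /\ shift q p = p.
Proof.
  intros [_ [l Hl]]. apply NNPP; intro Hn.
  set (f := fun i : nat => shift (Z.of_nat i) p).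
  assert (ND : NoDup (map f (seq 0 (S (length l))))).
  { apply NoDup_map_NoDup_ForallPairs; [|apply seq_NoDup].
    intros i j _ _ E. apply NNPP; intro Hij. apply Hn.
    destruct (proj1 (Nat.lt_gt_cases i j) Hij) as [Hlt|Hgt].
    - exists (Z.of_nat j - Z.of_nat i)%Z. split; [lia|]. now apply shift_eq_period.
    - exists (Z.of_nat i - Z.of_nat j)%Z. split; [lia|]. now apply shift_eq_period. }
  apply NoDup_incl_length with (l' := l) in ND.
  - rewrite length_map, length_seq in ND. lia.
  - intros x Hx. apply in_map_iff in Hx. destruct Hx as [i [<- _]]. apply Hl.
Qed.

Definition adherent_to_multiples (e : pot) (q m : Z) : Prop :=
  forall dl, 0 < dl -> exists t, supclose dl (shift m e) (shift (q * t) e).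

Lemma adherent_to_multiples_subgroup e q : Z_subgroup (adherent_to_multiples e q).
Proof.
  split; [|split].
  - intros dl Hdl. exists 0%Z. rewrite Z.mul_0_r. apply supclose_refl. lra.
  - intros m1 m2 H1 H2 dl Hdl.
    destruct (H1 (dl / 2)) as [t1 T1]; [lra|]. destruct (H2 (dl / 2)) as [t2 T2]; [lra|].
    exists (t1 + t2)%Z. apply supclose_trans_half with (shift (q * t1 + m2) e).
    + now apply supclose_shift_shift.
    + apply (supclose_shift_shift _ (q * t1)) in T2.
      replace (q * (t1 + t2))%Z with (q * t2 + q * t1)%Z by lia.
      now replace (q * t1 + m2)%Z with (m2 + q * t1)%Z by lia.
  - intros m H dl Hdl. destruct (H dl Hdl) as [t T]. exists (- t)%Z.
    apply (supclose_shift_shift _ (- m - q * t)), supclose_sym in T.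
    replace (m + (- m - q * t))%Z with (q * - t)%Z in T by lia.
    now replace (q * t + (- m - q * t))%Z with (- m)%Z in T by lia.
Qed.

Lemma adherent_to_multiples_mul e q t : adherent_to_multiples e q (q * t).
Proof. intros dl Hdl. exists t. apply supclose_refl. lra. Qed.

(* The cosets of [qZ] missing the closure are finitely many, each at positive distance. *)
Lemma adherent_to_multiples_nbhd e q : (0 < q)%Z -> exists dl, 0 < dl /\
  forall m, supclose dl (shift m e) e -> adherent_to_multiples e q m.
Proof.
  intros Hq. pose proof (adherent_to_multiples_subgroup e q) as HS.
  destruct (finite_uniform_radius (fun a dl => ~ adherent_to_multiples e q (Z.of_nat a) ->
      forall t, ~ supclose dl (shift (Z.of_nat a) e) (shift (q * t) e)) (Z.to_nat q))
    as [dl [Hdl Hall]].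
  - intros a d1 d2 Hd H2 Ha t Ht. apply (H2 Ha t). eapply supclose_weaken; [|exact Ht]. lra.
  - intros a _. destruct (classic (adherent_to_multiples e q (Z.of_nat a))) as [Ha|Ha].
    + exists 1. split; [lra|]. easy.
    + apply not_all_ex_not in Ha as [dl Hdl].
      apply imply_to_and in Hdl as [Hdl Hno].
      exists dl. split; [exact Hdl|]. intros _ t Ht. apply Hno. now exists t.
  - exists dl. split; [exact Hdl|]. intros m Hm.
    pose proof (Z.mod_pos_bound m q Hq) as Hb.
    assert (Hres : adherent_to_multiples e q (m mod q)).
    { apply NNPP; intro Hno.
      apply (Hall (Z.to_nat (m mod q)) ltac:(lia)) with (- (m / q))%Z;
        rewrite Z2Nat.id by lia; [exact Hno|].
      rewrite <- (shift_0 e) in Hm at 2.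
      apply (supclose_shift_shift _ (q * - (m / q))) in Hm.
      rewrite Z.mod_eq by lia. now replace (m - q * (m / q))%Z with (m + q * - (m / q))%Z by lia. }
    destruct HS as (_ & Hadd & _).
    rewrite (Z.div_mod m q) by lia. apply Hadd; [apply adherent_to_multiples_mul|exact Hres].
Qed.

Definition open_modulus (e : pot) (r : Z) : Prop :=
  (0 < r)%Z /\ exists dl, 0 < dl /\ forall m, supclose dl (shift m e) e -> (r | m)%Z.

Lemma limit_periodic_open_modulus e : limit_periodic e -> forall eps, 0 < eps ->
  exists r, open_modulus e r /\ forall m, (r | m)%Z -> supclose eps (shift m e) e.
Proof.
  intros [_ Hlp] eps He.
  destruct (Hlp (eps / 3)) as [p [Hp Hep]]; [lra|].
  destruct (periodic_has_period p Hp) as [q [Hq Hper]].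
  assert (Hmult : forall t, supclose (2 * eps / 3) (shift (q * t) e) e).
  { intro t. replace (2 * eps / 3) with (eps / 3 + eps / 3) by field.
    apply supclose_trans with (shift (q * t) p).
    - now apply supclose_shift.
    - rewrite (Z_subgroup_mul _ q t (period_subgroup p) Hper). now apply supclose_sym. }
  pose proof (adherent_to_multiples_subgroup e q) as HS.
  destruct (Z_least_positive (adherent_to_multiples e q)) as [r [Hr [Ar Hmin]]].
  { exists q. split; [exact Hq|]. rewrite <- (Z.mul_1_r q) at 2.
    apply adherent_to_multiples_mul. }
  exists r. split.
  - split; [exact Hr|]. destruct (adherent_to_multiples_nbhd e q Hq) as [dl [Hdl Hnb]].
    exists dl. split; [exact Hdl|]. intros m Hm.
    exact (Z_subgroup_least_divides _ r m HS Hr Ar Hmin (Hnb m Hm)).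
  - intros m [t ->]. rewrite Z.mul_comm.
    destruct (Z_subgroup_mul _ r t HS Ar (eps / 3)) as [t' T]; [lra|].
    replace eps with (eps / 3 + 2 * eps / 3) by field.
    eapply supclose_trans; [exact T|apply Hmult].
Qed.

Lemma expi_add a b : expi (a + b) = Cmult (expi a) (expi b).
Proof. unfold expi, Cmult; simpl. rewrite cos_plus, sin_plus. f_equal; ring. Qed.

Lemma expi_add_2PI x : expi (x + 2 * PI) = expi x.
Proof.
  unfold expi. replace (x + 2 * PI) with (x + 2 * INR 1 * PI) by (simpl; ring).
  now rewrite cos_period, sin_period.
Qed.

Lemma expi_add_2PI_mul x k : expi (x + 2 * PI * IZR k) = expi x.
Proof.
  revert x. induction k as [|k IH|k IH] using Z.peano_ind; intro x.
  - f_equal. simpl. ring.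
  - rewrite succ_IZR. replace (x + 2 * PI * (IZR k + 1)) with (x + 2 * PI + 2 * PI * IZR k) by ring.
    now rewrite IH, expi_add_2PI.
  - replace (Z.pred k) with (k - 1)%Z by lia. rewrite minus_IZR.
    replace (x + 2 * PI * (IZR k - 1)) with (x - 2 * PI + 2 * PI * IZR k) by ring.
    rewrite IH, <- expi_add_2PI. f_equal. ring.
Qed.

Lemma cos_add_2PI_mul x k : cos (x + 2 * PI * IZR k) = cos x.
Proof. exact (f_equal fst (expi_add_2PI_mul x k)). Qed.

Lemma Cmod_expi t : Cmod (expi t) = 1.
Proof.
  unfold Cmod, expi; simpl. pose proof (sin2_cos2 t) as E. unfold Rsqr in E.
  replace (cos t * (cos t * 1) + sin t * (sin t * 1)) with 1 by lra. apply sqrt_1.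
Qed.

Lemma Cmod_sub_self z : Cmod (Cminus z z) = 0.
Proof.
  destruct z as [a b]. unfold Cmod, Cminus, Cplus, Copp; simpl.
  rewrite <- sqrt_0. f_equal. ring.
Qed.

Lemma Cmod_1_sub_expi_sqr t : Cmod (Cminus (expi 0) (expi t)) ^ 2 = 2 - 2 * cos t.
Proof.
  unfold Cmod, Cminus, Cplus, Copp, expi; simpl. rewrite cos_0, sin_0, !Rmult_1_r, sqrt_sqrt.
  - pose proof (sin2_cos2 t) as E. unfold Rsqr in E. nra.
  - pose proof (pow2_ge_0 (1 - cos t)); pose proof (pow2_ge_0 (sin t)). nra.
Qed.

(* Among the [q]-th roots of unity, [1] is the only one closer to [1] than [expi (2 PI / q)]. *)
Lemma cos_mul_le_of_not_divide q m : (0 < q)%Z -> ~ (q | m)%Z ->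
  cos (IZR m * (2 * PI / IZR q)) <= cos (2 * PI / IZR q).
Proof.
  intros Hq Hnd. set (t0 := 2 * PI / IZR q).
  pose proof (Z.mod_pos_bound m q Hq) as Hb.
  assert (Hb0 : (m mod q <> 0)%Z) by (intro E; apply Hnd, Z.mod_divide; lia).
  assert (HQ : 2 <= IZR q) by (apply IZR_le; lia).
  assert (B1 : 1 <= IZR (m mod q)) by (apply IZR_le; lia).
  assert (B2 : IZR (m mod q) <= IZR q - 1) by (rewrite <- minus_IZR; apply IZR_le; lia).
  assert (E : t0 * IZR q = 2 * PI) by (unfold t0; field; lra).
  pose proof PI_RGT_0.
  assert (Ht0 : 0 < t0 <= PI) by (split; nra).
  replace (IZR m * t0) with (IZR (m mod q) * t0 + 2 * PI * IZR (m / q)).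
  2: { rewrite (Z.div_mod m q) at 3 by lia. rewrite plus_IZR, mult_IZR, <- E. ring. }
  rewrite cos_add_2PI_mul. set (t := IZR (m mod q) * t0).
  assert (T : t0 <= t <= 2 * PI - t0) by (unfold t; split; nra).
  destruct (Rle_dec t PI).
  - apply cos_decr_1; lra.
  - replace (cos t) with (cos (2 * PI - t)); [apply cos_decr_1; lra|].
    replace (2 * PI - t) with (- t + 2 * PI * IZR 1) by (simpl; ring).
    now rewrite cos_add_2PI_mul, cos_neg.
Qed.

Section ModulusCharacter.

Variables (e : pot) (r : Z) (dl : R).
Hypothesis r_pos : (0 < r)%Z.
Hypothesis dl_pos : 0 < dl.
Hypothesis modulus : forall m, supclose dl (shift m e) e -> (r | m)%Z.

Definition modulus_shift (x : pot) : Z :=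
  epsilon (inhabits 0%Z) (fun k => supclose (dl / 2) x (shift k e)).

Definition modulus_character (x : pot) : C :=
  expi (IZR (modulus_shift x) * (2 * PI / IZR r)).

Lemma modulus_character_near x k : hull e x -> supclose (dl / 2) x (shift k e) ->
  modulus_character x = expi (IZR k * (2 * PI / IZR r)).
Proof.
  intros Hx Hk.
  assert (Hs : supclose (dl / 2) x (shift (modulus_shift x) e)).
  { unfold modulus_shift. apply epsilon_spec, (proj2 Hx). lra. }
  assert (Hsk : supclose dl (shift (modulus_shift x) e) (shift k e)).
  { apply supclose_trans_half with x; auto using supclose_sym. }
  apply supclose_shift_sub, modulus in Hsk as [c Hc].
  unfold modulus_character. replace (modulus_shift x) with (k + c * r)%Z by lia.
  rewrite plus_IZR, mult_IZR.
  replace ((IZR k + IZR c * IZR r) * (2 * PI / IZR r))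
    with (IZR k * (2 * PI / IZR r) + 2 * PI * IZR c).
  - apply expi_add_2PI_mul.
  - field. apply not_0_IZR. lia.
Qed.

End ModulusCharacter.

Lemma open_modulus_freq_module e mul inv r : bounded e -> hull_group e mul inv ->
  open_modulus e r -> freq_module e mul (2 * PI / IZR r).
Proof.
  intros Be Ge [Hr [dl [Hdl Hmod]]].
  pose proof (modulus_character_near e r dl Hr Hdl Hmod) as Hnear.
  exists (modulus_character e r dl). split; [|split; [|split]].
  - intros x _. apply Cmod_expi.
  - intros x y Hx Hy.
    destruct (hull_mul_approx e mul inv x y (dl / 2) Be Ge Hx Hy) as (j & k & Hj & Hk & Hjk).
    { lra. }
    rewrite (Hnear x j), (Hnear y k), (Hnear _ (j + k)%Z), <- expi_add; auto.
    + f_equal. rewrite plus_IZR. ring.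
    + now apply (proj1 Ge).
  - intros x Hx eps He. exists (dl / 4). split; [lra|]. intros y Hy Hxy.
    destruct (proj2 Hx (dl / 4)) as [k Hk]; [lra|].
    rewrite (Hnear x k), (Hnear y k), Cmod_sub_self; auto; [lra| |].
    + apply supclose_trans_half with x; [apply supclose_sym|]; eapply supclose_weaken; eauto; lra.
    + eapply supclose_weaken; [|exact Hk]. lra.
  - intros k. apply Hnear; [now apply hull_shift|]. apply supclose_refl. lra.
Qed.

Lemma freq_module_open_modulus e mul q : bounded e -> (0 < q)%Z ->
  freq_module e mul (2 * PI / IZR q) -> open_modulus e q.
Proof.
  intros Be Hq [chi [_ [_ [Hcont Horb]]]]. split; [exact Hq|].
  destruct (Z.eq_dec q 1) as [->|Hq1].
  { exists 1. split; [lra|]. intros. apply Z.divide_1_l. }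
  set (t0 := 2 * PI / IZR q).
  assert (HQ : 2 <= IZR q) by (apply IZR_le; lia).
  assert (E : t0 * IZR q = 2 * PI) by (unfold t0; field; lra).
  pose proof PI_RGT_0.
  assert (Hcos : cos t0 < 1).
  { rewrite <- cos_0. apply cos_decreasing_1; nra. }
  pose proof (COS_bound t0) as [Hcos1 _].
  set (c := 2 - 2 * cos t0).
  destruct (Hcont e (hull_self e Be) (c / 4)) as [dl [Hdl Hd]]; [unfold c; lra|].
  exists dl. split; [exact Hdl|]. intros m Hm.
  specialize (Hd _ (hull_shift e m Be) (supclose_sym _ _ _ Hm)).
  rewrite <- (shift_0 e) in Hd at 1. rewrite !Horb in Hd.
  fold t0 in Hd. rewrite Rmult_0_l in Hd.
  pose proof (Cmod_1_sub_expi_sqr (IZR m * t0)) as Hsq.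
  pose proof (Cmod_ge_0 (Cminus (expi 0) (expi (IZR m * t0)))).
  apply NNPP; intro Hnd. pose proof (cos_mul_le_of_not_divide q m Hq Hnd) as Hle.
  fold t0 in Hle. set (z := Cmod _) in *.
  assert (z * z <= c / 4 * (c / 4)) by (apply Rmult_le_compat; lra).
  unfold c in *. nra.
Qed.

Definition orbit_uniformly_continuous (a b : pot) : Prop :=
  forall eps, 0 < eps -> exists dl, 0 < dl /\
    forall k l, supclose dl (shift k a) (shift l a) -> supclose eps (shift k b) (shift l b).

Lemma orbit_uniformly_continuous_of_moduli a b : limit_periodic b ->
  (forall r, open_modulus b r -> open_modulus a r) -> orbit_uniformly_continuous a b.
Proof.
  intros Lb Hmod eps He. destruct (limit_periodic_open_modulus b Lb eps He) as [r [Hr Hmul]].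
  destruct (Hmod r Hr) as [_ [dl [Hdl Hdiv]]]. exists dl. split; [exact Hdl|].
  intros k l H. apply supclose_shift_sub, Hdiv in H. now apply supclose_shift_sub, Hmul.
Qed.

Lemma inv_INR_succ_eventually_lt dl : 0 < dl ->
  exists N, forall i, (N <= i)%nat -> / (INR i + 1) < dl.
Proof.
  intros Hdl. destruct (archimed (/ dl)) as [Hup _].
  pose proof (Rinv_0_lt_compat _ Hdl).
  assert (Hup0 : (0 < up (/ dl))%Z) by (apply lt_IZR; lra).
  exists (Z.to_nat (up (/ dl))). intros i Hi.
  apply le_INR in Hi. rewrite INR_IZR_INZ, Z2Nat.id in Hi by lia.
  rewrite <- (Rinv_inv dl). apply Rinv_lt_contravar; [|lra].
  apply Rmult_lt_0_compat; [exact H|]. pose proof (pos_INR i). lra.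
Qed.

Section HullExtension.

Variables a b : pot.
Hypothesis a_bounded : bounded a.
Hypothesis b_bounded : bounded b.
Hypothesis ab_ucont : orbit_uniformly_continuous a b.

Definition approx_shift (x : pot) (i : nat) : Z :=
  epsilon (inhabits 0%Z) (fun k => supclose (/ (INR i + 1)) x (shift k a)).

Lemma approx_shift_spec x i : hull a x ->
  supclose (/ (INR i + 1)) x (shift (approx_shift x i) a).
Proof.
  intros [_ Hx]. unfold approx_shift. apply epsilon_spec, Hx.
  apply Rinv_0_lt_compat. pose proof (pos_INR i). lra.
Qed.

(* The limit exists because [shift (approx_shift x i) a] is Cauchy and [k |-> shift k b]
   is uniformly continuous on the orbit of [a]. *)
Definition hull_extension (x : pot) : pot := fun n =>
  epsilon (inhabits 0) (Un_cv (fun i => b (n + approx_shift x i)%Z)).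

Lemma hull_extension_cv x n : hull a x ->
  Un_cv (fun i => b (n + approx_shift x i)%Z) (hull_extension x n).
Proof.
  intros Hx. unfold hull_extension. apply epsilon_spec.
  destruct (Rcomplete.R_complete (fun i => b (n + approx_shift x i)%Z)) as [l Hl];
    [|now exists l].
  intros eps He. destruct (ab_ucont (eps / 2)) as [dl [Hdl Hu]]; [lra|].
  destruct (inv_INR_succ_eventually_lt (dl / 2)) as [N HN]; [lra|].
  exists N. intros i j Hi Hj. unfold Rdist.
  assert (Hij : supclose dl (shift (approx_shift x i) a) (shift (approx_shift x j) a)).
  { apply supclose_trans_half with x.
    - apply supclose_sym. eapply supclose_weaken; [|now apply approx_shift_spec].
      left. apply HN. lia.
    - eapply supclose_weaken; [|now apply approx_shift_spec]. left. apply HN. lia. }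
  specialize (Hu _ _ Hij n). unfold shift in Hu. lra.
Qed.

Lemma hull_extension_approx eps : 0 < eps -> exists dl, 0 < dl /\ forall x k, hull a x ->
  supclose dl x (shift k a) -> supclose eps (hull_extension x) (shift k b).
Proof.
  intros He. destruct (ab_ucont (eps / 2)) as [d0 [Hd0 Hu]]; [lra|].
  exists (d0 / 2). split; [lra|]. intros x k Hx Hk n.
  destruct (hull_extension_cv x n Hx (eps / 2)) as [N1 HN1]; [lra|].
  destruct (inv_INR_succ_eventually_lt (d0 / 2)) as [N2 HN2]; [lra|].
  set (i := Nat.max N1 N2).
  specialize (HN1 i ltac:(lia)). specialize (HN2 i ltac:(lia)).
  assert (Hik : supclose d0 (shift (approx_shift x i) a) (shift k a)).
  { apply supclose_trans_half with x; [|exact Hk].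
    apply supclose_sym. eapply supclose_weaken; [|now apply approx_shift_spec]. lra. }
  specialize (Hu _ _ Hik n). unfold R_dist in HN1. unfold shift in Hu |- *.
  replace (hull_extension x n - b (n + k)%Z)
    with ((hull_extension x n - b (n + approx_shift x i)%Z)
          + (b (n + approx_shift x i)%Z - b (n + k)%Z)) by ring.
  eapply Rle_trans; [apply Rabs_triang|]. rewrite Rabs_minus_sym in HN1. lra.
Qed.

Lemma hull_extension_hull x : hull a x -> hull b (hull_extension x).
Proof.
  intros Hx. split.
  - destruct b_bounded as [M HM].
    destruct (hull_extension_approx 1) as [dl [Hdl Happ]]; [lra|].
    destruct (proj2 Hx dl Hdl) as [k Hk]. exists (M + 1). intro n.
    specialize (Happ x k Hx Hk n). specialize (HM (n + k)%Z). unfold shift in Happ.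
    pose proof (Rabs_triang_inv (hull_extension x n) (b (n + k)%Z)). lra.
  - intros eps He. destruct (hull_extension_approx eps He) as [dl [Hdl Happ]].
    destruct (proj2 Hx dl Hdl) as [k Hk]. exists k. now apply Happ.
Qed.

Lemma hull_extension_shift k : hull_extension (shift k a) = shift k b.
Proof.
  apply supclose_all_eq. intros eps He.
  destruct (hull_extension_approx eps He) as [dl [Hdl Happ]].
  apply Happ; [now apply hull_shift|]. apply supclose_refl. lra.
Qed.

Lemma hull_extension_cont : cont_on (hull a) hull_extension.
Proof.
  intros x Hx eps He. destruct (hull_extension_approx (eps / 2)) as [dl [Hdl Happ]]; [lra|].
  exists (dl / 2). split; [lra|]. intros y Hy Hxy.
  destruct (proj2 Hx (dl / 2)) as [k Hk]; [lra|].
  apply supclose_trans_half with (shift k b).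
  - apply Happ; [exact Hx|]. eapply supclose_weaken; [|exact Hk]. lra.
  - apply supclose_sym, Happ; [exact Hy|].
    apply supclose_trans_half with x; [now apply supclose_sym|exact Hk].
Qed.

Lemma hull_extension_mul mula inva mulb invb :
  hull_group a mula inva -> hull_group b mulb invb -> forall x y, hull a x -> hull a y ->
  hull_extension (mula x y) = mulb (hull_extension x) (hull_extension y).
Proof.
  intros Ga Gb x y Hx Hy. apply supclose_all_eq. intros eps He.
  destruct Gb as (_ & _ & _ & _ & _ & Bcont & _ & Bshift).
  destruct (Bcont _ _ (hull_extension_hull x Hx) (hull_extension_hull y Hy) (eps / 2))
    as [e1 [He1 Hc]]; [lra|].
  destruct (hull_extension_approx e1 He1) as [d1 [Hd1 Happ1]].
  destruct (hull_extension_approx (eps / 2)) as [d2 [Hd2 Happ2]]; [lra|].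
  destruct (hull_mul_approx a mula inva x y (Rmin d1 d2) a_bounded Ga Hx Hy)
    as (j & k & Hj & Hk & Hjk); [now apply Rmin_pos|].
  apply supclose_trans_half with (shift (j + k) b).
  - apply Happ2; [now apply (proj1 Ga)|]. eapply supclose_weaken; [apply Rmin_r|exact Hjk].
  - rewrite <- Bshift. apply supclose_sym, Hc; try now apply hull_shift.
    + apply Happ1; [exact Hx|]. eapply supclose_weaken; [apply Rmin_l|exact Hj].
    + apply Happ1; [exact Hy|]. eapply supclose_weaken; [apply Rmin_l|exact Hk].
Qed.

End HullExtension.

Lemma hull_left_inverse a b (Phi Psi : pot -> pot) : bounded a -> bounded b ->
  (forall x, hull a x -> hull b (Phi x)) -> cont_on (hull a) Phi -> cont_on (hull b) Psi ->
  (forall k, Phi (shift k a) = shift k b) -> (forall k, Psi (shift k b) = shift k a) ->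
  forall x, hull a x -> Psi (Phi x) = x.
Proof.
  intros Ba Bb Himg Cphi Cpsi Ophi Opsi x Hx. apply supclose_all_eq. intros eps He.
  destruct (Cpsi (Phi x) (Himg x Hx) (eps / 2)) as [eta [Heta Hpsi]]; [lra|].
  destruct (Cphi x Hx eta Heta) as [dl [Hdl Hphi]].
  destruct (proj2 Hx (Rmin dl (eps / 2))) as [k Hk]; [apply Rmin_pos; lra|].
  apply supclose_trans_half with (shift k a).
  - rewrite <- (Opsi k). apply Hpsi; [now apply hull_shift|].
    rewrite <- (Ophi k). apply Hphi; [now apply hull_shift|].
    eapply supclose_weaken; [apply Rmin_l|exact Hk].
  - apply supclose_sym. eapply supclose_weaken; [apply Rmin_r|exact Hk].
Qed.

Lemma hull_iso_of_same_open_moduli d dt mul inv mult invt :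
  limit_periodic d -> limit_periodic dt -> hull_group d mul inv -> hull_group dt mult invt ->
  (forall r, open_modulus d r <-> open_modulus dt r) ->
  exists Phi Psi, hull_iso d mul dt mult Phi Psi.
Proof.
  intros Ld Ldt Gd Gdt Hmod. pose proof (proj1 Ld) as Bd. pose proof (proj1 Ldt) as Bdt.
  assert (U : orbit_uniformly_continuous d dt).
  { apply orbit_uniformly_continuous_of_moduli; [exact Ldt|]. intro r. apply Hmod. }
  assert (Ut : orbit_uniformly_continuous dt d).
  { apply orbit_uniformly_continuous_of_moduli; [exact Ld|]. intro r. apply Hmod. }
  exists (hull_extension d dt), (hull_extension dt d).
  split; [|split; [|split; [|split; [|split; [|split]]]]].
  - now apply hull_extension_hull.
  - now apply hull_extension_hull.
  - apply (hull_left_inverse d dt); auto using hull_extension_hull, hull_extension_cont,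
      hull_extension_shift.
  - apply (hull_left_inverse dt d); auto using hull_extension_hull, hull_extension_cont,
      hull_extension_shift.
  - now apply hull_extension_cont.
  - now apply hull_extension_cont.
  - now apply (hull_extension_mul d dt Bd Bdt U mul inv mult invt).
Qed.

Lemma open_modulus_iff_freq_module e mul inv r : bounded e -> hull_group e mul inv ->
  open_modulus e r <-> (0 < r)%Z /\ freq_module e mul (2 * PI / IZR r).
Proof.
  intros Be Ge. split.
  - intros Hr. split; [exact (proj1 Hr)|]. exact (open_modulus_freq_module e mul inv r Be Ge Hr).
  - intros [Hr Hf]. exact (freq_module_open_modulus e mul r Be Hr Hf).
Qed.

Lemma zspan_multiples (G1 G2 : R -> Prop) alpha :
  (forall a, G1 a -> exists c a', G2 a' /\ a = IZR c * a') -> zspan G1 alpha -> zspan G2 alpha.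
Proof.
  intros H [l [Hl ->]]. induction l as [|[z a] l IH].
  - exists nil. split; auto.
  - inversion Hl as [|? ? Ha Hl']; subst. simpl in Ha.
    destruct (IH Hl') as [l2 [Hl2 E2]]. destruct (H a Ha) as [c [a' [Ha' ->]]].
    exists (((z * c)%Z, a') :: l2). split; [now constructor|].
    simpl. rewrite E2, mult_IZR. ring.
Qed.

Lemma chain_divides (n : nat -> nat) : (forall j, Nat.divide (n j) (n (j + 1)%nat)) ->
  forall j i, (j <= i)%nat -> Nat.divide (n j) (n i).
Proof.
  intros H j i Hji. induction Hji as [|i Hji IH]; [apply Nat.divide_refl|].
  eapply Nat.divide_trans; [exact IH|]. rewrite <- Nat.add_1_r. apply H.
Qed.

Lemma infinite_subset_of_range (n : nat -> nat) (S : nat -> Prop) :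
  (forall m, S m -> exists i, n i = m) -> infinite_nat_set S ->
  forall j, exists i, (j < i)%nat /\ S (n i).
Proof.
  intros Hrange Hinf j. apply NNPP; intro Hno. apply Hinf.
  exists (map n (seq 0 (Datatypes.S j))). intros m Hm.
  destruct (Hrange m Hm) as [i <-]. apply in_map, in_seq.
  destruct (Nat.le_gt_cases i j); [lia|]. exfalso. apply Hno. now exists i.
Qed.

Definition freq_generator (S : nat -> Prop) (a : R) : Prop :=
  exists m, S m /\ a = 2 * PI / INR m.

(* Every [2 PI / n_j] is an integer multiple of [2 PI / n_i] for [n_i] further along the chain. *)
Lemma freq_module_eq_of_cofinal d mul Sd dt mult Sdt :
  freq_int_set d mul Sd -> freq_int_set dt mult Sdt ->
  infinite_nat_set Sdt -> (forall m, Sdt m -> Sd m) ->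
  forall alpha, freq_module d mul alpha <-> freq_module dt mult alpha.
Proof.
  intros [n [Hpos [Hdiv [HS HF]]]] [_ [_ [_ [_ HFt]]]] Hinf Hsub alpha.
  rewrite HF, HFt. fold (freq_generator Sd) (freq_generator Sdt). split.
  - apply zspan_multiples. intros a [m [Hm ->]].
    destruct (proj1 (HS m) Hm) as [j <-].
    destruct (infinite_subset_of_range n Sdt (fun m Hm => proj1 (HS m) (Hsub m Hm)) Hinf j)
      as [i [Hji Hi]].
    destruct (chain_divides n Hdiv j i ltac:(lia)) as [c Hc].
    exists (Z.of_nat c), (2 * PI / INR (n i)). split; [now exists (n i)|].
    rewrite <- INR_IZR_INZ, Hc, mult_INR.
    pose proof (Hpos i) as Hi0. rewrite Hc in Hi0.
    assert (INR c <> 0) by (apply not_0_INR; lia).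
    assert (INR (n j) <> 0) by (apply not_0_INR; lia).
    field; auto.
  - apply zspan_multiples. intros a [m [Hm ->]].
    exists 1%Z, (2 * PI / INR m). split; [now exists m; auto|]. simpl. ring.
Qed.

Theorem theorem2p9 :
  forall (d dt : pot) (mul : pot -> pot -> pot) (inv : pot -> pot)
         (mult : pot -> pot -> pot) (invt : pot -> pot) (Sd Sdt : nat -> Prop),
    limit_periodic d -> limit_periodic dt ->
    hull_group d mul inv -> hull_group dt mult invt ->
    freq_int_set d mul Sd -> infinite_nat_set Sd ->
    freq_int_set dt mult Sdt ->
    infinite_nat_set Sdt -> (forall m, Sdt m -> Sd m) ->
    exists Phi Psi : pot -> pot, hull_iso d mul dt mult Phi Psi.
Proof.
  intros d dt mul inv mult invt Sd Sdt Ld Ldt Gd Gdt Fd _ Fdt Inf Sub.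
  apply (hull_iso_of_same_open_moduli d dt mul inv mult invt Ld Ldt Gd Gdt).
  intros r.
  rewrite (open_modulus_iff_freq_module d mul inv r (proj1 Ld) Gd),
    (open_modulus_iff_freq_module dt mult invt r (proj1 Ldt) Gdt).
  now rewrite (freq_module_eq_of_cofinal d mul Sd dt mult Sdt Fd Fdt Inf Sub).
Qed.
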